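(* Let $D_{m,n}:=(K+1)(m+n)$ and, for a constant $B>0$ and $\epsilon>0$, define the sieve $$\mathcal{H}_{m,n}(\epsilon):=\big\{\vartheta\in\mathcal{H}_{m,n}:\ e^{-B\epsilon^2/\bar\lambda_{m,n}}\le z_\ell\le e^{B\epsilon^2/\bar\lambda_{m,n}}\ \text{for all coordinates } \ell=1,\dots,D_{m,n}\big\}.$$ There exist constants $A,B,C_s>0$ such that whenever $\epsilon^2\ge A K(m\vee n)\bar\lambda_{m,n}L_{m,n}$, $$\Pi_{\mathrm{fac}}\big(\mathcal{H}_{m,n}(\epsilon)^c\big)\le\exp\big(-C_s\,\epsilon^2/\bar\lambda_{m,n}\big).$$
   Context: $n,m,K$ positive integers; $\bar\lambda_{m,n}\in(0,1/2]$; $L_{m,n}:=\log(m+n)+\log(1/\bar\lambda_{m,n})$. Factor space $\mathcal{H}_{m,n}:=\mathbb{R}_+^n\times\mathbb{R}_+^m\times\mathbb{R}_+^{n\times K}\times\mathbb{R}_+^{m\times K}$, with elements $\vartheta=(\alpha,\rho,\Theta,B)$ whose $D_{m,n}=(K+1)(m+n)$ scalar coordinates are denoted $z_\ell$. The prior $\Pi_{\mathrm{fac}}$ makes all coordinates independent with Gamma distributions: $\alpha_i\sim\Gamma(a_\alpha,b_\alpha)$, $\rho_j\sim\Gamma(a_\rho,b_\rho)$, $\Theta_{ik}\sim\Gamma(a_\theta,b_\theta)$, $B_{jk}\sim\Gamma(a_\beta,b_\beta)$ with fixed positive shape and rate hyperparameters. *)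

From HB Require Import structures.
From mathcomp Require Import all_boot all_order all_algebra.
From mathcomp Require Import all_classical all_reals all_analysis.

Set Implicit Arguments.
Unset Strict Implicit.
Unset Printing Implicit Defensive.

Import Order.TTheory GRing.Theory Num.Theory.
Import numFieldNormedType.Exports.

Local Open Scope classical_set_scope.
Local Open Scope ring_scope.

Definition Gamma_fn (R : realType) (a : R) : R :=
  fine (\int[@lebesgue_measure R]_(t in (`]0%R, +oo[%classic : set R))
          ((t `^ (a - 1)) * expR (- t))%:E)%E.

Definition gamma_pdf (R : realType) (a b : R) (x : R) : R :=
  if 0 < x then b `^ a / Gamma_fn a * x `^ (a - 1) * expR (- (b * x)) else 0.

Definition has_gamma_law d (T : measurableType d) (R : realType)
  (P : probability T R) (X : {RV P >-> R}) (a b : R) : Prop :=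
  forall A : set R, measurable A ->
    distribution P X A = (\int[@lebesgue_measure R]_(x in A) (gamma_pdf a b x)%:E)%E.

Definition mutually_independent d (T : measurableType d) (R : realType)
  (P : probability T R) (I : finType) (X : I -> {RV P >-> R}) : Prop :=
  forall B : I -> set R, (forall i, measurable (B i)) ->
    P (\bigcap_(i in [set: I]) (X i @^-1` B i)) =
    (\big[*%E/1%E]_(i : I) P (X i @^-1` B i))%E.

(* Coordinates of the factor space H_{m,n} = R_+^n x R_+^m x R_+^{n x K} x R_+^{m x K}:
   alpha_i, rho_j, Theta_{ik}, B_{jk}.  There are (K+1)(m+n) of them. *)
Definition fac_coord (n m K : nat) : finType :=
  ('I_n + 'I_m + ('I_n * 'I_K) + ('I_m * 'I_K))%type.

Record hyper (R : realType) := Hyper {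
  a_alpha : R; b_alpha : R; a_rho : R; b_rho : R;
  a_theta : R; b_theta : R; a_beta : R; b_beta : R }.

Definition hyper_pos (R : realType) (h : hyper R) : Prop :=
  0 < a_alpha h /\ 0 < b_alpha h /\ 0 < a_rho h /\ 0 < b_rho h /\
  0 < a_theta h /\ 0 < b_theta h /\ 0 < a_beta h /\ 0 < b_beta h.

Definition coord_shape (R : realType) (h : hyper R) n m K (c : fac_coord n m K) : R :=
  match c with
  | inl (inl (inl _)) => a_alpha h
  | inl (inl (inr _)) => a_rho h
  | inl (inr _) => a_theta h
  | inr _ => a_beta h
  end.

Definition coord_rate (R : realType) (h : hyper R) n m K (c : fac_coord n m K) : R :=
  match c with
  | inl (inl (inl _)) => b_alpha h
  | inl (inl (inr _)) => b_rho h
  | inl (inr _) => b_theta h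
  | inr _ => b_beta h
  end.

Definition prior_fac d (T : measurableType d) (R : realType) (P : probability T R)
  (h : hyper R) n m K (z : fac_coord n m K -> {RV P >-> R}) : Prop :=
  mutually_independent z /\
  forall c, has_gamma_law (z c) (coord_shape h c) (coord_rate h c).

Definition Lmn (R : realType) (m n : nat) (lam : R) : R :=
  ln ((m + n)%:R) + ln (lam^-1).

Definition sieve (R : realType) n m K (B lam eps : R) : set (fac_coord n m K -> R) :=
  [set th | forall c, expR (- (B * eps ^+ 2 / lam)) <= th c <= expR (B * eps ^+ 2 / lam)].

From HB Require Import structures.
From mathcomp Require Import all_boot all_order all_algebra.
From mathcomp Require Import all_classical all_reals all_analysis.
From mathcomp Require Import measurable_realfun.
From mathcomp Require Import ring lra zify.

(* A Gamma(a, b) density is at most [c x^(a-1)] near 0 and at most [M x^(-2)] at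
   infinity, so a Gamma(a, b) variable leaves [e^(-t), e^t] with probability at most
   [c/a e^(-a t) + M e^(-t) <= C e^(-k t)], where [k = min(1, shapes)] and [C] depend
   only on the hyperparameters.  A union bound over the (K+1)(m+n) coordinates with
   [t = 3 s / k], [s = eps^2 / lam], bounds the mass outside the sieve by
   [(K+1)(m+n) C e^(-3 s)]; the hypothesis on [eps], with [L_{m,n} >= ln 2], makes
   both (K+1)(m+n) and [C] at most [s <= e^s]. *)

Set Implicit Arguments.
Unset Strict Implicit.
Unset Printing Implicit Defensive.

Import Order.TTheory GRing.Theory Num.Theory.
Import numFieldNormedType.Exports.

Local Open Scope classical_set_scope.
Local Open Scope ring_scope.

Section measure_bounds.
Context d (R : realType) (T : measurableType d) (mu : {measure set T -> \bar R}).
Local Open Scope ereal_scope.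

Lemma nondecreasing_bigcup_measure_le (F : (set T)^nat) (C : \bar R) :
  (forall i, measurable (F i)) -> nondecreasing_seq F ->
  (forall i, mu (F i) <= C) -> mu (\bigcup_i F i) <= C.
Proof.
move=> mF ndF FC.
have muF := nondecreasing_cvg_mu (mu := mu) mF (bigcup_measurable (fun i _ => mF i)) ndF.
rewrite -(cvg_lim _ muF) //; apply: lime_le; first by apply/cvg_ex; eexists; exact: muF.
exact: nearW.
Qed.

Lemma measure_bigsetU_le (I : Type) (s : seq I) (F : I -> set T) :
  (forall i, measurable (F i)) ->
  mu (\big[setU/set0]_(i <- s) F i) <= \sum_(i <- s) mu (F i).
Proof.
move=> mF; elim: s => [|i s IH]; first by rewrite !big_nil measure0.
rewrite !big_cons; apply: le_trans (measureU2 _ _ _) (leeD _ IH) => //.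
exact: bigsetU_measurable.
Qed.

End measure_bounds.

Section powR_integral.
Variable R : realType.

Lemma continuous_powR (p x : R) : 0 < x -> {for x, continuous (fun y : R => y `^ p)}.
Proof.
move=> x_gt0; apply/differentiable_continuous; rewrite -derivable1_diffP.
by apply: derivable_powR; rewrite in_itv /= andbT.
Qed.

Lemma integral_cc_powR (k p al be : R) : p != 0 -> 0 < al -> al < be ->
  (\int[lebesgue_measure]_(x in `[al, be]) (k * x `^ (p - 1))%:E =
   (k / p * (be `^ p - al `^ p))%:E)%E.
Proof.
move=> p_neq0 al_gt0 al_lt_be.
pose F y := k / p * y `^ p.
have cF : {for al, continuous F} /\ {for be, continuous F}.
  by split; apply: continuousM; [exact: cst_continuous | exact: continuous_powR
    | exact: cst_continuous | apply: continuous_powR; exact: lt_trans al_lt_be].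
have dF (x : R) : 0 < x -> is_derive x 1 F (k * x `^ (p - 1)).
  move=> x_gt0; have -> : k * x `^ (p - 1) = k / p *: (p * x `^ (p - 1)).
    by rewrite /GRing.scale /= mulrA mulfVK.
  exact/is_deriveZ/is_derive1_powR.
rewrite mulrBr EFinB (continuous_FTC2 (F := F)) //.
- apply: continuous_in_subspaceT => x; rewrite inE /= in_itv /= => /andP[alx _].
  apply: (@continuousM _ R^o (fun=> k) (fun y => y `^ (p - 1))).
    exact: cst_continuous.
  exact/continuous_powR/(lt_le_trans al_gt0).
- split; [move=> x; rewrite in_itv /= => /andP[alx _] | |].
  + by have [] := dF x (lt_trans al_gt0 alx).
  + exact/cvg_at_right_filter/cF.1.
  + exact/cvg_at_left_filter/cF.2.
- move=> x; rewrite in_itv /= => /andP[alx _].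
  by rewrite derive1E; have [_ ->] := dF x (lt_trans al_gt0 alx).
Qed.

End powR_integral.

Section gamma_density.
Variables (R : realType) (a b : R).

Lemma Gamma_fn_ge0 : 0 <= Gamma_fn a.
Proof.
apply: fine_ge0; apply: integral_ge0 => x _.
by rewrite lee_fin mulr_ge0 ?powR_ge0 ?expR_ge0.
Qed.

Definition gamma_norm : R := b `^ a / Gamma_fn a.

Lemma gamma_norm_ge0 : 0 <= gamma_norm.
Proof. by rewrite divr_ge0 ?powR_ge0 ?Gamma_fn_ge0. Qed.

Lemma gamma_pdf_ge0 x : 0 <= gamma_pdf a b x.
Proof.
rewrite /gamma_pdf; case: ifP => // _.
by rewrite !mulr_ge0 ?powR_ge0 ?expR_ge0 ?invr_ge0 ?Gamma_fn_ge0.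
Qed.

Lemma measurable_gamma_pdf : measurable_fun [set: R] (fun x => (gamma_pdf a b x)%:E).
Proof.
apply/measurable_EFinP; apply: measurable_fun_ifT.
- exact: measurable_fun_ltr.
- apply: measurable_funM; first by apply: measurable_funM => //; exact: measurable_powR.
  change (measurable_fun setT (expR \o (-%R \o ( *%R b)))).
  apply: measurableT_comp; first exact: measurable_expR.
  apply: measurableT_comp => //; exact: measurable_funM.
- exact: measurable_cst.
Qed.

Hypothesis b_gt0 : 0 < b.

Lemma gamma_pdf_le_powR x : 0 < x -> gamma_pdf a b x <= gamma_norm * x `^ (a - 1).
Proof.
move=> x_gt0; rewrite /gamma_pdf x_gt0 -/gamma_norm.
apply: ler_piMr; first exact: mulr_ge0 gamma_norm_ge0 (powR_ge0 _ _).
by rewrite expR_le1 oppr_le0 mulr_ge0 ?ltW.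
Qed.

Let N := (Num.truncn (a + 1)).+1.

(* From [expR (b x) >= (b x)^N / N!] with [N > a + 1]. *)
Definition gamma_upper_coef : R := gamma_norm * N`!%:R / b ^+ N.

Lemma gamma_upper_coef_ge0 : 0 <= gamma_upper_coef.
Proof.
by apply: divr_ge0; [exact: mulr_ge0 gamma_norm_ge0 _ | exact/exprn_ge0/ltW].
Qed.

Lemma gamma_pdf_le_powR2 x : 1 <= x -> gamma_pdf a b x <= gamma_upper_coef * x `^ (-2).
Proof.
move=> x_ge1; have x_gt0 : 0 < x by apply: lt_le_trans x_ge1.
have bN_gt0 : 0 < b ^+ N by rewrite exprn_gt0.
have fN_gt0 : 0 < N`!%:R :> R by rewrite ltr0n fact_gt0.
have powN : x `^ (a - 1) <= x ^+ N * x `^ (-2).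
  rewrite -powR_mulrn ?(ltW x_gt0) // -powRD; last by rewrite (gt_eqF x_gt0) implybT.
  by apply: ler_powR => //; have := truncnS_gt (a + 1); rewrite /N; lra.
have expN : x ^+ N * expR (- (b * x)) <= N`!%:R / b ^+ N.
  have ebx : (b * x) ^+ N / N`!%:R <= expR (b * x).
    apply: le_trans (expR_ge1Dxn N.-1 (mulr_ge0 (ltW b_gt0) (ltW x_gt0))).
    by rewrite lerDr.
  have -> : x ^+ N = N`!%:R / b ^+ N * ((b * x) ^+ N / N`!%:R).
    by rewrite exprMn; field; rewrite !gt_eqF.
  rewrite -(mulrA (N`!%:R / b ^+ N)); apply: ler_piMr; first by rewrite divr_ge0 ?ltW.
  by rewrite expRN ler_pdivrMr ?expR_gt0 // mul1r.
have -> : gamma_upper_coef * x `^ (-2) = gamma_norm * (N`!%:R / b ^+ N * x `^ (-2)).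
  by rewrite /gamma_upper_coef !mulrA.
rewrite /gamma_pdf x_gt0 -/gamma_norm -[leLHS]mulrA.
apply: ler_wpM2l; first exact: gamma_norm_ge0.
apply: le_trans (ler_wpM2r (expR_ge0 _) powN) _.
by rewrite mulrAC ler_wpM2r ?powR_ge0.
Qed.

End gamma_density.

Definition gamma_tail_const (R : realType) (a b : R) : R :=
  gamma_norm a b / a + gamma_upper_coef a b.

Lemma gamma_tail_const_ge0 (R : realType) (a b : R) :
  0 < a -> 0 < b -> 0 <= gamma_tail_const a b.
Proof.
move=> a_gt0 b_gt0.
by rewrite addr_ge0 ?gamma_upper_coef_ge0 // divr_ge0 ?gamma_norm_ge0 // ltW.
Qed.

Section gamma_tails.
Context (R : realType) (a b : R) d (T : measurableType d) (P : probability T R).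
Context (X : {RV P >-> R}).
Hypotheses (a_gt0 : 0 < a) (b_gt0 : 0 < b) (X_gamma : has_gamma_law X a b).
Local Open Scope ereal_scope.

Lemma gamma_law_cc_le (al be k p : R) : (p != 0)%R -> (0 < al)%R -> (al < be)%R ->
  (forall x, (al <= x <= be)%R -> (gamma_pdf a b x <= k * x `^ (p - 1))%R) ->
  distribution P X `[al, be] <= (k / p * (be `^ p - al `^ p))%:E.
Proof.
move=> p_neq0 al_gt0 al_lt_be pdf_le.
rewrite X_gamma // -integral_cc_powR //; apply: ge0_le_integral => //.
- by move=> x _; rewrite lee_fin gamma_pdf_ge0.
- exact: measurable_funTS (measurable_gamma_pdf a b).
- exact/measurable_EFinP/measurable_funTS/measurable_funM.
Qed.

Lemma gamma_law_le0 : distribution P X `]-oo, 0%R] = 0.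
Proof.
rewrite X_gamma //=; apply: integral0_eq => x /=; rewrite in_itv /= => x_le0.
by rewrite /gamma_pdf ltNge x_le0.
Qed.

(* The bound [x `^ (a - 1)] may blow up at [0], so integrate it on [`[u / i.+2, u]]
   and let [i] grow. *)
Lemma gamma_law_oc_le (u : R) : (0 < u)%R ->
  distribution P X `]0%R, u] <= (gamma_norm a b / a * u `^ a)%:E.
Proof.
move=> u_gt0; pose F i := `[(u / i.+2%:R)%R, u]%classic.
have oc_sub : `]0%R, u]%classic `<=` \bigcup_i F i.
  move=> x /=; rewrite in_itv /= => /andP[x_gt0 x_le_u].
  exists (Num.truncn (u / x)) => //=; rewrite /F /= in_itv /= x_le_u andbT.
  rewrite ler_pdivrMr ?ltr0n // mulrC -ler_pdivrMr //; apply/ltW.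
  by apply: lt_le_trans (truncnS_gt _) _; rewrite ler_nat.
apply: le_trans (le_measure _ _ _ oc_sub) _; rewrite ?inE.
- exact: measurable_itv.
- by apply: bigcup_measurable => i _; exact: measurable_itv.
apply: nondecreasing_bigcup_measure_le => [i|i j ij|i].
- exact: measurable_itv.
- apply/subsetPset => x; rewrite /F /= !in_itv /= => /andP[+ ->]; rewrite andbT.
  apply: le_trans; rewrite ler_pM2l // lef_pV2 ?posrE ?ltr0n // ler_nat.
  by rewrite !ltnS.
- have lo_gt0 : (0 < u / i.+2%:R)%R by rewrite divr_gt0 ?ltr0n.
  apply: le_trans (gamma_law_cc_le (lt0r_neq0 a_gt0) lo_gt0 _ _) _.
  + by rewrite ltr_pdivrMr ?ltr0n // ltr_pMr // ltr1n.
  + move=> x /andP[lo_le_x _]; apply: gamma_pdf_le_powR => //.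
    exact: lt_le_trans lo_le_x.
  + rewrite lee_fin; apply: ler_wpM2l; first by rewrite divr_ge0 ?gamma_norm_ge0 // ltW.
    by rewrite lerBlDr lerDl powR_ge0.
Qed.

Lemma gamma_law_ge_le (y : R) : (1 <= y)%R ->
  distribution P X `[y, +oo[ <= (gamma_upper_coef a b / y)%:E.
Proof.
move=> y_ge1; have y_gt0 : (0 < y)%R by apply: lt_le_trans y_ge1.
pose F i := `[y, (y + i.+1%:R)%R]%classic.
have ge_sub : `[y, +oo[%classic `<=` \bigcup_i F i.
  move=> x /=; rewrite in_itv /= andbT => y_le_x.
  exists (Num.truncn (x - y)) => //=; rewrite /F /= in_itv /= y_le_x /=.
  by apply/ltW; rewrite -ltrBlDl; exact: truncnS_gt.
apply: le_trans (le_measure _ _ _ ge_sub) _; rewrite ?inE.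
- exact: measurable_itv.
- by apply: bigcup_measurable => i _; exact: measurable_itv.
apply: nondecreasing_bigcup_measure_le => [i|i j ij|i].
- exact: measurable_itv.
- apply/subsetPset => x; rewrite /F /= !in_itv /= => /andP[-> x_le] /=.
  by apply: le_trans x_le _; rewrite lerD2l ler_nat ltnS.
- have m1_neq0 : (-1 != 0 :> R)%R by rewrite oppr_eq0 oner_eq0.
  apply: le_trans (gamma_law_cc_le m1_neq0 y_gt0 _ _) _.
  + by rewrite ltrDl ltr0n.
  + move=> x /andP[y_le_x _]; rewrite (_ : -1 - 1 = -2)%R; last by lra.
    exact/gamma_pdf_le_powR2/(le_trans y_ge1).
  + rewrite lee_fin invrN1 mulrN1 mulNr -mulrN opprB.
    rewrite !powR_inv1 ?addr_ge0 ?(ltW y_gt0) // ler_wpM2l ?gamma_upper_coef_ge0 //.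
    by rewrite lerBlDr lerDl invr_ge0 addr_ge0 ?(ltW y_gt0).
Qed.

Lemma gamma_law_notin_expR (t : R) : (0 <= t)%R ->
  distribution P X (~` `[expR (- t), expR t]%classic) <=
  (gamma_norm a b / a * expR (- (a * t)) + gamma_upper_coef a b * expR (- t))%:E.
Proof.
move=> t_ge0.
have et_ge1 : (1 <= expR t)%R by rewrite -expR0 ler_expR.
have notin_sub : ~` `[expR (- t), expR t]%classic `<=`
    `]-oo, 0%R]%classic `|` `]0%R, expR (- t)]%classic `|` `[expR t, +oo[%classic.
  move=> x /=; rewrite in_itv /= => /negP; rewrite negb_and -!ltNge => x_out.
  case: (leP x 0%R) => [x_le0|x_gt0]; first by left; left; rewrite /= in_itv.
  case/orP: x_out => x_out; first by left; right; rewrite /= in_itv /= x_gt0 ltW.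
  by right; rewrite /= in_itv /= ltW.
apply: le_trans (le_measure _ _ _ notin_sub) _; rewrite ?inE.
- by apply: measurableC; exact: measurable_itv.
- by apply/measurableU; [apply/measurableU|]; exact: measurable_itv.
rewrite EFinD; apply: le_trans (measureU2 _ _ _) (leeD _ _).
- by apply/measurableU; exact: measurable_itv.
- exact: measurable_itv.
- apply: le_trans (measureU2 _ _ _) _; try exact: measurable_itv.
  rewrite [X in X + _]gamma_law_le0 add0r.
  apply: le_trans (gamma_law_oc_le (expR_gt0 _)) _.
  by rewrite -expRM mulNr (mulrC t).
- apply: le_trans (gamma_law_ge_le et_ge1) _.
  by rewrite expRN.
Qed.

Lemma gamma_law_notin_expR_le (k t : R) : (k <= a)%R -> (k <= 1)%R -> (0 <= t)%R ->
  distribution P X (~` `[expR (- t), expR t]%classic) <=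
  (gamma_tail_const a b * expR (- (k * t)))%:E.
Proof.
move=> k_le_a k_le1 t_ge0; apply: le_trans (gamma_law_notin_expR t_ge0) _.
rewrite lee_fin /gamma_tail_const mulrDl lerD // ler_wpM2l ?ler_expR ?lerN2 //.
- by rewrite divr_ge0 ?gamma_norm_ge0 ?ltW.
- exact: ler_wpM2r.
- exact: gamma_upper_coef_ge0.
- by rewrite -[leRHS]mul1r ler_wpM2r.
Qed.

End gamma_tails.

Lemma card_fac_coord n m K : #|fac_coord n m K| = (K.+1 * (m + n))%N.
Proof. by rewrite !card_sum !card_prod !card_ord; lia. Qed.

Lemma card_fac_coord_le n m K : (0 < K)%N ->
  (#|fac_coord n m K| <= 4 * (K * maxn m n))%N.
Proof.
move=> K_gt0; rewrite card_fac_coord (_ : 4 * _ = 2 * K * (2 * maxn m n))%N; last by lia.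
by apply: leq_mul; lia.
Qed.

Lemma sieve_compl (R : realType) n m K (B lam eps : R) T (z : fac_coord n m K -> T -> R) :
  ~` [set w | (fun c => z c w) \in @sieve R n m K B lam eps] =
  \big[setU/set0]_(c <- enum (fac_coord n m K))
    (z c @^-1` ~` `[expR (- (B * eps ^+ 2 / lam)), expR (B * eps ^+ 2 / lam)]).
Proof.
rewrite -bigcup_seq; apply/seteqP; split => w /=.
- rewrite in_setE /sieve /= => /existsNP [c zc_out].
  by exists c; rewrite /= ?mem_enum // in_itv.
- by move=> [c _] /=; rewrite in_itv /= in_setE => zc_out /(_ c).
Qed.

Section hyperparameters.
Variables (R : realType) (h : hyper R).
Hypothesis hpos : hyper_pos h.

Definition prior_tail_const : R :=
  gamma_tail_const (a_alpha h) (b_alpha h) + gamma_tail_const (a_rho h) (b_rho h) +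
  gamma_tail_const (a_theta h) (b_theta h) + gamma_tail_const (a_beta h) (b_beta h).

Definition prior_rate : R :=
  Num.min 1 (Num.min (Num.min (a_alpha h) (a_rho h)) (Num.min (a_theta h) (a_beta h))).

Lemma coord_shape_rate_gt0 n m K (c : fac_coord n m K) :
  0 < coord_shape h c /\ 0 < coord_rate h c.
Proof. by case: hpos => [? [? [? [? [? [? [? ?]]]]]]]; case: c => [[[?|?]|?]|?]. Qed.

Lemma prior_rate_gt0 : 0 < prior_rate.
Proof.
case: hpos => [aa_gt0 [_ [ar_gt0 [_ [at_gt0 [_ [ab_gt0 _]]]]]]].
by rewrite !lt_min ltr01 aa_gt0 ar_gt0 at_gt0 ab_gt0.
Qed.

Lemma prior_rate_le1 : prior_rate <= 1.
Proof. by rewrite ge_min lexx. Qed.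

Lemma prior_rate_le_shape n m K (c : fac_coord n m K) : prior_rate <= coord_shape h c.
Proof. by case: c => [[[?|?]|?]|?]; rewrite !ge_min lexx ?orbT. Qed.

Lemma gamma_tail_const_le_prior n m K (c : fac_coord n m K) :
  gamma_tail_const (coord_shape h c) (coord_rate h c) <= prior_tail_const.
Proof.
case: hpos => [p1 [p2 [p3 [p4 [p5 [p6 [p7 p8]]]]]]].
have := gamma_tail_const_ge0 p1 p2; have := gamma_tail_const_ge0 p3 p4.
have := gamma_tail_const_ge0 p5 p6; have := gamma_tail_const_ge0 p7 p8.
by rewrite /prior_tail_const; case: c => [[[?|?]|?]|?] /=; lra.
Qed.

Lemma prior_tail_const_ge0 : 0 <= prior_tail_const.
Proof.
case: hpos => [p1 [p2 [p3 [p4 [p5 [p6 [p7 p8]]]]]]].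
have := gamma_tail_const_ge0 p1 p2; have := gamma_tail_const_ge0 p3 p4.
have := gamma_tail_const_ge0 p5 p6; have := gamma_tail_const_ge0 p7 p8.
by rewrite /prior_tail_const; lra.
Qed.

Lemma prior_fac_sieve_compl_le n m K (B lam eps : R) d (T : measurableType d)
    (P : probability T R) (z : fac_coord n m K -> {RV P >-> R}) :
  prior_fac h z -> 0 <= B * eps ^+ 2 / lam ->
  (P (~` [set w | (fun c => z c w) \in @sieve R n m K B lam eps]) <=
   (#|fac_coord n m K|%:R * prior_tail_const *
      expR (- (prior_rate * (B * eps ^+ 2 / lam))))%:E)%E.
Proof.
move=> [_ z_gamma] t_ge0; rewrite sieve_compl; set t := B * eps ^+ 2 / lam.
have coord_le c : (P (z c @^-1` ~` `[expR (- t), expR t]) <=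
    (prior_tail_const * expR (- (prior_rate * t)))%:E)%E.
  have [a_gt0 b_gt0] := coord_shape_rate_gt0 c.
  apply: le_trans (gamma_law_notin_expR_le a_gt0 b_gt0 (z_gamma c)
    (prior_rate_le_shape c) prior_rate_le1 t_ge0) _.
  by rewrite lee_fin ler_wpM2r ?expR_ge0 ?gamma_tail_const_le_prior.
apply: le_trans (measure_bigsetU_le P _ _) _.
  by move=> c; apply: measurable_funPTI; apply: measurableC; exact: measurable_itv.
apply: le_trans (lee_sum _ _) _ => [c _|]; first exact: coord_le.
by rewrite sumEFin big_enum /= lee_fin sumr_const -(mulrA _ prior_tail_const) mulr_natl.
Qed.

End hyperparameters.

Lemma ln2_le_Lmn (R : realType) m n (lam : R) :
  (0 < m + n)%N -> 0 < lam -> lam <= 2^-1 -> ln 2 <= Lmn m n lam.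
Proof.
move=> mn_gt0 lam_gt0 lam_le; rewrite /Lmn -[leLHS]add0r lerD //.
  by rewrite ln_ge0 // ler1n.
by rewrite ler_ln ?posrE ?invr_gt0 // -[2 in leLHS]invrK lef_pV2 ?posrE ?invr_gt0.
Qed.

Lemma mul_expRN3_le (R : realType) (x y s : R) :
  0 <= x <= s -> 0 <= y <= s -> x * y * expR (- (3 * s)) <= expR (- s).
Proof.
move=> /andP[x_ge0 x_le] /andP[y_ge0 y_le].
have s_le : s <= expR s by apply: le_trans (expR_ge1Dx s); rewrite lerDr.
have -> : expR (- s) = expR s * expR s * expR (- (3 * s)).
  by rewrite -!expRD; congr expR; lra.
by rewrite ler_wpM2r ?expR_ge0 // ler_pM // (le_trans _ s_le).
Qed.

Theorem propositionL5 (R : realType) (h : hyper R) (hpos : hyper_pos h) :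
  exists A B Cs : R, [/\ 0 < A, 0 < B, 0 < Cs &
    forall (n m K : nat), (0 < n)%N -> (0 < m)%N -> (0 < K)%N ->
    forall lam : R, 0 < lam -> lam <= 2^-1 ->
    forall (d : measure_display) (T : measurableType d) (P : probability T R)
      (z : fac_coord n m K -> {RV P >-> R}),
      prior_fac h z ->
    forall eps : R, 0 < eps ->
      A * K%:R * (maxn m n)%:R * lam * Lmn m n lam <= eps ^+ 2 ->
      (P (~` [set w | (fun c => z c w) \in @sieve R n m K B lam eps])
        <= (expR (- (Cs * eps ^+ 2 / lam)))%:E)%E].
Proof.
set k := prior_rate h; set C := prior_tail_const h.
have k_gt0 : 0 < k := prior_rate_gt0 hpos.
have C_ge0 : 0 <= C := prior_tail_const_ge0 hpos.
have ln2_gt0 : 0 < ln (2 : R) by rewrite ln_gt0 // ltr1n.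
exists ((4 + C) / ln 2), (3 / k), 1; split; rewrite ?divr_gt0 //; first lra.
move=> n m K _ m_gt0 K_gt0 lam lam_gt0 lam_le d T P z z_prior eps _ eps_ge.
set s := eps ^+ 2 / lam; set KM : R := K%:R * (maxn m n)%:R.
have KM_ge1 : 1 <= KM by rewrite /KM -natrM ler1n muln_gt0 K_gt0 leq_max m_gt0.
have D_le : #|fac_coord n m K|%:R <= 4 * KM.
  by rewrite /KM -!natrM ler_nat card_fac_coord_le.
have L_ge : ln 2 <= Lmn m n lam by apply: ln2_le_Lmn; rewrite ?addn_gt0 ?m_gt0.
have s_ge : (4 + C) * KM <= s.
  rewrite ler_pdivlMr //; apply: le_trans eps_ge.
  rewrite (_ : _ * lam * _ = (4 + C) * KM * lam * (Lmn m n lam / ln 2)); last first.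
    by rewrite /KM; field; rewrite gt_eqF.
  apply: ler_peMr; first by rewrite !mulr_ge0 ?(ltW lam_gt0) //; lra.
  by rewrite ler_pdivlMr // mul1r.
have kt : k * (3 / k * eps ^+ 2 / lam) = 3 * s by rewrite /s; field; rewrite !gt_eqF.
apply: le_trans (prior_fac_sieve_compl_le hpos z_prior _) _.
  by rewrite -(pmulr_rge0 _ k_gt0) kt mulr_ge0 // divr_ge0 ?sqr_ge0 ?ltW.
rewrite -/k -/C kt mul1r lee_fin; apply: mul_expRN3_le; apply/andP; split => //; nra.
Qed.
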